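(* The relation $\{(\rho,\pi):\rho=[n]\text{ and }\pi=[n]!\text{ for some }n\ge1\}$ is $\Pi_2$-definable in $\mathbf Y^*=\langle\mathcal P,\le,[1]+[1]\rangle$.
   Context: $\mathcal P$ is the set of all integer partitions, including the empty partition; a partition is a nonincreasing finite sequence of positive integers (its parts). $[n]$ denotes the partition with a single part $n$. For $n\ge1$, the factorial partition $[n]!$ is the partition $(n,n-1,\dots,2,1)$ with parts $1,2,\dots,n$ each appearing exactly once. Young's lattice $\mathbf Y=\langle\mathcal P,\le\rangle$ has $(s_1,\dots,s_r)\le(n_1,\dots,n_t)$ iff $r\le t$ and $s_i\le n_i$ for all $i\le r$; $\mathbf Y^*$ is $\mathbf Y$ with a constant symbol for the partition $(1,1)$. A relation is $\Pi_n$-definable if it is defined by a first-order formula in the language $\{\le,(1,1)\}$ in prenex form with $n$ alternating quantifier blocks, the outermost universal, and a quantifier-free matrix. *)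

From mathcomp Require Import all_boot.
Set Implicit Arguments. Unset Strict Implicit. Unset Printing Implicit Defensive.

Definition is_part (s : seq nat) : bool :=
  sorted (fun a b => b <= a) s && all (fun x => 0 < x) s.

Definition partition := {s : seq nat | is_part s}.

Definition yle (p q : partition) : bool :=
  (size (sval p) <= size (sval q)) &&
  all (fun i => nth 0 (sval p) i <= nth 0 (sval q) i) (iota 0 (size (sval p))).

(* The constant (1,1) = [1]+[1]. *)
Definition p11 : partition := exist _ [:: 1; 1] (erefl true).

Inductive term : Type := TVar of nat | TC11.

Inductive formula : Type :=
| FLe of term & term
| FEq of term & term
| FTrue
| FFalse
| FNot of formula
| FAnd of formula & formula
| FOr of formula & formula
| FImp of formula & formula
| FAll of nat & formula
| FEx of nat & formula.

Definition env := nat -> partition.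

Definition upd (e : env) (x : nat) (a : partition) : env :=
  fun y => if y == x then a else e y.

Definition teval (e : env) (t : term) : partition :=
  match t with TVar x => e x | TC11 => p11 end.

Fixpoint sat (e : env) (f : formula) : Prop :=
  match f with
  | FLe t u => is_true (yle (teval e t) (teval e u))
  | FEq t u => teval e t = teval e u
  | FTrue => True
  | FFalse => False
  | FNot g => ~ sat e g
  | FAnd g h => sat e g /\ sat e h
  | FOr g h => sat e g \/ sat e h
  | FImp g h => sat e g -> sat e h
  | FAll x g => forall a : partition, sat (upd e x a) g
  | FEx x g => exists a : partition, sat (upd e x a) g
  end.

Fixpoint qf (f : formula) : bool :=
  match f with
  | FLe _ _ | FEq _ _ | FTrue | FFalse => true
  | FNot g => qf g
  | FAnd g h | FOr g h | FImp g h => qf g && qf h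
  | FAll _ _ | FEx _ _ => false
  end.

(* Prenex hierarchy: Pi n / Sigma n = n alternating quantifier blocks
   (outermost universal / existential), quantifier-free matrix.
   Blocks may be empty (so Sigma_n, Pi_n are included in Pi_{n+1}). *)
Inductive Pi : nat -> formula -> Prop :=
| Pi0 f : qf f -> Pi 0 f
| PiS_base n f : Sigma n f -> Pi n.+1 f
| PiS_all n x f : Pi n.+1 f -> Pi n.+1 (FAll x f)
with Sigma : nat -> formula -> Prop :=
| Sigma0 f : qf f -> Sigma 0 f
| SigmaS_base n f : Pi n f -> Sigma n.+1 f
| SigmaS_ex n x f : Sigma n.+1 f -> Sigma n.+1 (FEx x f).

Definition Pi_definable2 (n : nat) (R : partition -> partition -> Prop) : Prop :=
  exists phi : formula, Pi n phi /\
    forall e : env, R (e 0) (e 1) <-> sat e phi.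

(* [n] and [n]! = (n, n-1, ..., 1). *)
Definition single_fact_rel (rho pi : partition) : Prop :=
  exists n : nat, 1 <= n /\ sval rho = [:: n] /\ sval pi = rev (iota 1 n).

From mathcomp Require Import all_boot zify.
From Stdlib Require Import Classical.
Set Implicit Arguments. Unset Strict Implicit. Unset Printing Implicit Defensive.

(* A partition is handled through its row function i |-> (i-th part, or 0),
   in which Young's order is pointwise and equality is extensional.  The
   relation is shown equivalent to the conjunction of
   - rho has at most one row (not above (1,1)) and is nonempty;
   - the one-row partitions below pi are those below rho (same first row);
   - no interval [u, pi] is a three-element chain u < m < pi.
   The third clause says that no domino can be removed from pi, i.e. that
   pi is a staircase: a horizontal domino exists when two consecutive rows
   differ by two or more, a vertical one when two equal nonzero rows end a
   block of equal rows.  Conversely, below a staircase any chain u < m < pi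
   can be completed by adding to u one of the two cells of pi / u that do not
   lie in a common domino.  Finally, the conjunction is the meaning of an
   explicit formula  forall y u m, exists z w, (matrix),  which is Pi_2. *)

Definition row (p : partition) (i : nat) : nat := nth 0 (sval p) i.

Lemma part_sorted (p : partition) : sorted geq (sval p).
Proof. by case: p => s /= /andP[]. Qed.

Lemma part_pos (p : partition) : all (leq 1) (sval p).
Proof. by case: p => s /= /andP[]. Qed.

Lemma row_gt0 (p : partition) (i : nat) : (0 < row p i) = (i < size (sval p)).
Proof.
rewrite /row; case: (ltnP i (size (sval p))) => [lt_ip|le_pi].
  by have /allP := part_pos p; apply; apply: mem_nth.
by rewrite nth_default.
Qed.

Lemma row_default (p : partition) (i : nat) : size (sval p) <= i -> row p i = 0.
Proof. exact: nth_default. Qed.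

Lemma row_mono (p : partition) (i j : nat) : i <= j -> row p j <= row p i.
Proof.
move=> le_ij; rewrite /row.
case: (ltnP j (size (sval p))) => [lt_jp|le_pj]; last by rewrite (nth_default _ le_pj).
have geq_trans : transitive geq by move=> y x z /= le_yx le_zy; apply: leq_trans le_zy le_yx.
apply: (sorted_leq_nth geq_trans leqnn 0 (part_sorted p)) => //.
by rewrite inE (leq_ltn_trans le_ij).
Qed.

Lemma eq_from_nth_pos (s t : seq nat) :
  all (leq 1) s -> all (leq 1) t -> (forall i, nth 0 s i = nth 0 t i) -> s = t.
Proof.
move=> /allP pos_s /allP pos_t eq_st.
have size_le (a b : seq nat) : all (leq 1) a -> (forall i, nth 0 a i = nth 0 b i) ->
    size a <= size b.
  move=> /allP pos_a eq_ab; rewrite leqNgt; apply/negP => lt_ba.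
  by have := pos_a _ (mem_nth 0 lt_ba); rewrite eq_ab nth_default.
apply: (@eq_from_nth _ 0) => [|i _]; last exact: eq_st.
by apply/eqP; rewrite eqn_leq !size_le //; apply/allP.
Qed.

Lemma row_inj (p q : partition) : (forall i, row p i = row q i) -> p = q.
Proof.
by move=> eq_pq; apply/val_inj/eq_from_nth_pos; rewrite ?part_pos.
Qed.

Lemma row_neq (p q : partition) (k : nat) : row p k <> row q k -> p <> q.
Proof. by move=> neq_k eq_pq; apply: neq_k; rewrite eq_pq. Qed.

Lemma yleP (p q : partition) : yle p q <-> (forall i, row p i <= row q i).
Proof.
split=> [/andP[_ /allP le_pq] i | le_pq].
  case: (ltnP i (size (sval p))) => [lt_ip|le_pi]; first by apply: le_pq; rewrite mem_iota.
  by rewrite /row (nth_default _ le_pi).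
apply/andP; split; last by apply/allP => i _; apply: le_pq.
have := le_pq (size (sval q)); rewrite [row q _]/row nth_default // leqn0 => /eqP row0.
by rewrite leqNgt -row_gt0 row0.
Qed.

Lemma yle_refl (p : partition) : yle p p.
Proof. by apply/yleP. Qed.

Lemma yle_trans (p q r : partition) : yle p q -> yle q r -> yle p r.
Proof.
by move=> /yleP le_pq /yleP le_qr; apply/yleP => i; apply: leq_trans (le_pq i) (le_qr i).
Qed.

Lemma yle_anti (p q : partition) : yle p q -> yle q p -> p = q.
Proof.
move=> /yleP le_pq /yleP le_qp; apply: row_inj => i.
by apply/eqP; rewrite eqn_leq le_pq le_qp.
Qed.

Lemma part_of_fun (f : nat -> nat) (N : nat) :
  (forall i, f i.+1 <= f i) -> f N = 0 -> exists p : partition, forall i, row p i = f i.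
Proof.
move=> f_step fN0.
have f_mono i j : i <= j -> f j <= f i.
  apply: (homo_leq (r := fun a b => b <= a)) => // y x z le_yx le_zy.
  exact: leq_trans le_zy le_yx.
have ex0 : exists n, f n == 0 by exists N; apply/eqP.
case: (ex_minnP ex0) => M /eqP fM0 minM.
have part_f : is_part (mkseq f M).
  apply/andP; split.
    by apply/(sortedP 0) => i; rewrite size_mkseq => ltiM; rewrite !nth_mkseq // ltnW.
  apply/allP => x /mapP[i]; rewrite mem_iota add0n => /andP[_ lt_iM] ->.
  by rewrite lt0n; apply/negP => /minM; rewrite leqNgt lt_iM.
exists (exist is_part _ part_f) => i; rewrite /row /=.
case: (ltnP i M) => [lt_iM|le_Mi]; first by rewrite nth_mkseq.
by rewrite nth_default ?size_mkseq //; apply/esym/eqP; rewrite -leqn0 -fM0 f_mono.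
Qed.

Lemma part_below (p : partition) (f : nat -> nat) :
  (forall i, f i.+1 <= f i) -> (forall i, f i <= row p i) ->
  exists q : partition, forall i, row q i = f i.
Proof.
move=> f_step f_le; apply: (@part_of_fun f (size (sval p)) f_step).
by apply/eqP; rewrite -leqn0 -(@row_default p _ (leqnn _)) f_le.
Qed.

Lemma squeeze_eq (u p w w' : partition) :
  yle u w -> yle w p -> yle u w' -> yle w' p ->
  (forall k, row u k < row p k -> row w k = row w' k) -> w = w'.
Proof.
move=> /yleP uw /yleP wp /yleP uw' /yleP w'p agree; apply: row_inj => k.
case: (ltnP (row u k) (row p k)) => [/agree //|le_pu].
by have := uw k; have := wp k; have := uw' k; have := w'p k; lia.
Qed.

Definition grows_at (u : partition) (i : nat) (v : partition) : Prop :=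
  forall k, row v k = row u k + (k == i).

Lemma grows_yle (u v : partition) (i : nat) : grows_at u i v -> yle u v.
Proof. by move=> grow_v; apply/yleP => k; rewrite grow_v leq_addr. Qed.

Lemma grows_neq (u v : partition) (i : nat) : grows_at u i v -> v <> u.
Proof. by move=> grow_v; apply: (@row_neq _ _ i); rewrite grow_v eqxx addn1; lia. Qed.

Lemma add_cell (u : partition) (i : nat) : (0 < i -> row u i < row u i.-1) ->
  exists v : partition, grows_at u i v.
Proof.
move=> addable; apply: (@part_of_fun _ (size (sval u) + i.+1)) => [k|].
  case: (eqVneq k.+1 i) => [eq_ki|_]; last first.
    by rewrite addn0 (leq_trans (row_mono u (leqnSn k))) ?leq_addr.
  by subst i; rewrite (ltn_eqF (ltnSn k)) addn0 addn1; apply: addable.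
by rewrite row_default ?leq_addr // gtn_eqF // ltn_addl.
Qed.

(* If u < X, one cell can be added to u while staying below X: add it to the
   first row where u is shorter than X. *)
Lemma cover_step (u X : partition) : yle u X -> u <> X ->
  exists (i : nat) (v : partition), yle v X /\ grows_at u i v.
Proof.
move=> /yleP le_uX neq_uX.
have ex_lt : exists i, row u i < row X i.
  apply: NNPP => no_lt; apply: neq_uX; apply: row_inj => i.
  apply/eqP; rewrite eqn_leq le_uX leqNgt /=; apply/negP => lt_i.
  by apply: no_lt; exists i.
case: (ex_minnP ex_lt) => i lt_i min_i.
have [|v grow_v] := @add_cell u i.
  case: i lt_i min_i => [//|i] lt_i min_i _ /=.
  have eq_i : row u i = row X i.
    by apply/eqP; rewrite eqn_leq le_uX leqNgt /=; apply/negP => /min_i; rewrite ltnn.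
  by rewrite eq_i (leq_trans lt_i) ?row_mono.
exists i, v; split=> //; apply/yleP => k; rewrite grow_v.
by case: (eqVneq k i) => [->|_]; rewrite ?addn1 ?addn0.
Qed.

Definition staircase (p : partition) : Prop :=
  forall k, 0 < row p k -> row p k.+1 + 1 = row p k.

Definition no_short_interval (p : partition) : Prop :=
  forall u m : partition, yle u m -> u <> m -> yle m p -> m <> p ->
  exists w : partition, yle u w /\ yle w p /\ w <> u /\ w <> m /\ w <> p.

Lemma staircase_two_cells (p u : partition) (i j : nat) : staircase p ->
  (forall k, row p k = row u k + (k == i) + (k == j)) ->
  i != j /\ exists w : partition, grows_at u j w.
Proof.
move=> stair row_p.
have neq_ij : i != j.
  apply/eqP => eq_ij; subst j.
  have := stair i; have := row_mono u (leqnSn i).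
  by rewrite !row_p eqxx (gtn_eqF (ltnSn i)) /=; lia.
split=> //; apply: add_cell; case: j neq_ij row_p => [//|j] neq_ij row_p _ /=.
have pos_j : 0 < row p j.
  by rewrite (leq_trans _ (row_mono p (leqnSn j))) // row_p eqxx addn1.
have := stair j pos_j; rewrite !row_p eqxx (ltn_eqF (ltnSn j)) eq_sym (negbTE neq_ij).
by case: (j == i) => /=; lia.
Qed.

(* Below a staircase, a chain u < m < p extends by one cell added to u: either
   u + (first cell) or m + (next cell) is a fourth element, or else p / u is two
   cells in distinct rows and u + (the second cell) is one. *)
Lemma staircase_no_short (p : partition) : staircase p -> no_short_interval p.
Proof.
move=> stair u m le_um neq_um le_mp neq_mp.
have [i [v [le_vm grow_v]]] := cover_step le_um neq_um.
case: (eqVneq v m) => [eq_vm|/eqP neq_vm]; last first.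
  exists v; do !split => //.
  - exact: grows_yle grow_v.
  - exact: yle_trans le_vm le_mp.
  - exact: grows_neq grow_v.
  - by move=> eq_vp; apply: neq_mp; apply: yle_anti => //; rewrite -eq_vp.
subst v.
have [j [x [le_xp grow_x]]] := cover_step le_mp neq_mp.
case: (eqVneq x p) => [eq_xp|/eqP neq_xp]; last first.
  exists x; do !split => //.
  - exact: yle_trans le_um (grows_yle grow_x).
  - move=> eq_xu; apply: neq_um; apply: yle_anti => //.
    by rewrite -eq_xu; apply: grows_yle grow_x.
  - exact: grows_neq grow_x.
subst x.
have [neq_ij [w grow_w]] : i != j /\ exists w, grows_at u j w.
  by apply: (staircase_two_cells stair) => k; rewrite grow_x grow_v.
exists w; do !split.
- exact: grows_yle grow_w.
- by apply/yleP => k; rewrite grow_x grow_v grow_w addnAC leq_addr.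
- exact: grows_neq grow_w.
- apply: (@row_neq _ _ j); rewrite grow_w grow_v eqxx eq_sym (negbTE neq_ij) /=; lia.
- apply: (@row_neq _ _ i); rewrite grow_w grow_x grow_v eqxx (negbTE neq_ij) /=; lia.
Qed.

Section NoShortInterval.
Variable p : partition.
Hypothesis no_short : no_short_interval p.

Lemma not_three_point_interval (u m : partition) :
  yle u m -> u <> m -> yle m p -> m <> p ->
  ~ (forall w, yle u w -> yle w p -> w = u \/ w = m \/ w = p).
Proof.
move=> le_um neq_um le_mp neq_mp only3.
have [w [le_uw [le_wp [neq_wu [neq_wm neq_wp]]]]] := no_short le_um neq_um le_mp neq_mp.
by case: (only3 w le_uw le_wp) => [|[|]].
Qed.

(* No horizontal domino can be removed from p: consecutive rows differ by at most one. *)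
Lemma row_drop_le1 (k : nat) : row p k <= row p k.+1 + 1.
Proof.
rewrite leqNgt; apply/negP => gap.
have [u row_u] : exists u : partition, forall l, row u l = row p l - 2 * (l == k).
  apply: (@part_below p) => l; last exact: leq_subr.
  have := row_mono p (leqnSn l); do 2 case: eqP => ? /=; subst; lia.
have [m row_m] : exists m : partition, forall l, row m l = row p l - (l == k).
  apply: (@part_below p) => l; last exact: leq_subr.
  have := row_mono p (leqnSn l); do 2 case: eqP => ? /=; subst; lia.
have only_k (l : nat) : row u l < row p l -> l = k.
  by rewrite row_u; case: eqP => //; rewrite muln0 subn0 ltnn.
have le_um : yle u m by apply/yleP => l; rewrite row_u row_m; case: eqP => _ /=; lia.
have le_mp : yle m p by apply/yleP => l; rewrite row_m leq_subr.
apply: (not_three_point_interval le_um _ le_mp).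
- by apply: (@row_neq _ _ k); rewrite row_u row_m eqxx; lia.
- by apply: (@row_neq _ _ k); rewrite row_m eqxx; lia.
move=> w le_uw le_wp.
have squeeze (w' : partition) : yle u w' -> yle w' p -> row w k = row w' k -> w = w'.
  move=> le_uw' le_w'p eq_k.
  by apply: squeeze_eq le_uw le_wp le_uw' le_w'p _ => l /only_k ->.
move/yleP/(_ k): le_uw; move/yleP/(_ k): le_wp; rewrite row_u eqxx => w_hi w_lo.
have [w_eq|[w_eq|w_eq]] : row w k = row p k - 2 \/ row w k = row p k - 1 \/ row w k = row p k.
  by lia.
- by left; apply: squeeze; rewrite ?yle_refl ?row_u ?eqxx ?(yle_trans le_um le_mp).
- by right; left; apply: squeeze; rewrite ?row_m ?eqxx.
- by right; right; apply: squeeze; rewrite ?yle_refl ?(yle_trans le_um le_mp).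
Qed.

(* No vertical domino can be removed from p: a nonzero row longer than the next
   one is shorter than the previous one. *)
Lemma row_strict_at_corner (k : nat) :
  0 < row p k.+1 -> row p k.+2 < row p k.+1 -> row p k.+1 < row p k.
Proof.
move=> pos corner; rewrite ltn_neqAle row_mono // andbT; apply/negP => /eqP flat.
have [u row_u] : exists u : partition,
    forall l, row u l = row p l - (l == k) - (l == k.+1).
  apply: (@part_below p) => l; last by lia.
  have := row_mono p (leqnSn l); rewrite eqSS; do 3 case: eqP => ? /=; subst; lia.
have [m row_m] : exists m : partition, forall l, row m l = row p l - (l == k.+1).
  apply: (@part_below p) => l; last exact: leq_subr.
  have := row_mono p (leqnSn l); rewrite eqSS; do 2 case: eqP => ? /=; subst; lia.
have only_kk (l : nat) : row u l < row p l -> l = k \/ l = k.+1.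
  by rewrite row_u; do 2 case: eqP => ?; auto; rewrite !subn0 ltnn.
have le_um : yle u m.
  by apply/yleP => l; rewrite row_u row_m; do 2 case: eqP => _ /=; lia.
have le_mp : yle m p by apply/yleP => l; rewrite row_m leq_subr.
apply: (not_three_point_interval le_um _ le_mp).
- by apply: (@row_neq _ _ k); rewrite row_u row_m eqxx (ltn_eqF (ltnSn k)); lia.
- by apply: (@row_neq _ _ k.+1); rewrite row_m eqxx; lia.
move=> w le_uw le_wp.
have squeeze (w' : partition) : yle u w' -> yle w' p ->
    row w k = row w' k -> row w k.+1 = row w' k.+1 -> w = w'.
  move=> le_uw' le_w'p eq_k eq_k1.
  by apply: squeeze_eq le_uw le_wp le_uw' le_w'p _ => l /only_kk [] ->.
have w_mono := row_mono w (leqnSn k).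
move/yleP: le_uw => le_uw; move/yleP: le_wp => le_wp.
have := le_uw k; have := le_wp k; have := le_uw k.+1; have := le_wp k.+1.
rewrite !row_u eqxx (ltn_eqF (ltnSn k)) (gtn_eqF (ltnSn k)) /= => w1_hi w1_lo w0_hi w0_lo.
have [[w0 w1]|[[w0 w1]|[w0 w1]]] :
    (row w k = row p k - 1 /\ row w k.+1 = row p k.+1 - 1) \/
    (row w k = row p k /\ row w k.+1 = row p k.+1 - 1) \/
    (row w k = row p k /\ row w k.+1 = row p k.+1) by lia.
- left; apply: squeeze; rewrite ?yle_refl ?(yle_trans le_um le_mp) // row_u !eqxx;
    rewrite ?(ltn_eqF (ltnSn k)) ?(gtn_eqF (ltnSn k)) /=; lia.
- right; left; apply: squeeze => //; rewrite row_m ?eqxx ?(ltn_eqF (ltnSn k)) /=; lia.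
- by right; right; apply: squeeze; rewrite ?yle_refl ?(yle_trans le_um le_mp).
Qed.

(* Nonzero rows are strictly decreasing: otherwise move down to the last row of
   a block of equal rows, where a vertical domino is removable. *)
Lemma row_strict (k : nat) : 0 < row p k.+1 -> row p k.+1 < row p k.
Proof.
have [d le_d] : exists d, size (sval p) <= k + d by exists (size (sval p)); rewrite leq_addl.
elim: d k le_d => [|d IH] k le_d pos.
  by move: pos; rewrite row_gt0 addn0 in le_d *; lia.
case: (ltnP (row p k.+2) (row p k.+1)) => [corner|no_corner].
  exact: row_strict_at_corner.
have := IH k.+1; rewrite addSnnS => /(_ le_d (leq_trans pos no_corner)); lia.
Qed.

Lemma no_short_staircase : staircase p.
Proof.
move=> k pos_k; have := row_drop_le1 k.
case: (posnP (row p k.+1)) => [->|pos_k1]; first lia.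
by have := row_strict pos_k1; lia.
Qed.

End NoShortInterval.

Lemma sval_eqP (q : partition) (s : seq nat) :
  all (leq 1) s -> sval q = s <-> (forall i, row q i = nth 0 s i).
Proof.
move=> pos_s; split=> [<- //|row_q].
exact: eq_from_nth_pos (part_pos q) pos_s row_q.
Qed.

Lemma nth_stair (n i : nat) : nth 0 (rev (iota 1 n)) i = n - i.
Proof.
case: (ltnP i n) => [lt_in|le_ni].
  by rewrite nth_rev size_iota // nth_iota; lia.
by rewrite nth_default ?size_rev ?size_iota //; lia.
Qed.

Lemma stair_pos (n : nat) : all (leq 1) (rev (iota 1 n)).
Proof. by rewrite all_rev; apply/allP => x; rewrite mem_iota => /andP[]. Qed.

Lemma yle_p11 (y : partition) : yle p11 y <-> 0 < row y 1.
Proof.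
rewrite yleP; split=> [/(_ 1) //|pos_y1] [|[|i]] //.
  exact: leq_trans pos_y1 (row_mono y (leqnSn 0)).
by rewrite [row p11 _]/row /= nth_nil.
Qed.

Lemma one_row (y : partition) (i : nat) : row y 1 = 0 -> 0 < i -> row y i = 0.
Proof. by case: i => // i y1 _; apply/eqP; rewrite -leqn0 -y1 row_mono. Qed.

Lemma yle_one_row (y q : partition) : row y 1 = 0 -> yle y q <-> row y 0 <= row q 0.
Proof.
move=> y1; rewrite yleP; split=> [/(_ 0) //|le_0] [//|i].
by rewrite one_row.
Qed.

Lemma one_row_exists (a : nat) : exists y : partition, row y 0 = a /\ row y 1 = 0.
Proof.
have [|y row_y] := @part_of_fun (fun i => if i == 0 then a else 0) 1 _ erefl; first by case.
by exists y; rewrite !row_y.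
Qed.

Lemma nonempty_iff (r : partition) : (exists z, ~ yle r z) <-> 0 < row r 0.
Proof.
split=> [[z not_rz]|pos_r0].
  rewrite lt0n; apply/eqP => r0; apply: not_rz; apply/yleP => i.
  by rewrite (leq_trans (row_mono r (leq0n i))) // r0.
exists (exist is_part [::] isT) => /yleP/(_ 0).
by rewrite [X in _ <= X]/row nth_nil leqNgt pos_r0.
Qed.

Lemma first_rows_agree (r p : partition) : row r 1 = 0 ->
  (forall y, ~ yle p11 y -> (yle y p <-> yle y r)) <-> row p 0 = row r 0.
Proof.
move=> r1; split=> [same|eq_0 y /yle_p11 y1]; last first.
  have {}y1 : row y 1 = 0 by case: (row y 1) y1.
  by rewrite !yle_one_row // eq_0.
have below (a : nat) : a <= row p 0 <-> a <= row r 0.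
  have [y [y0 y1]] := one_row_exists a.
  by have := same y; rewrite yle_p11 y1 ltnn !yle_one_row // y0; apply.
by apply/eqP; rewrite eqn_leq (proj1 (below _)) // (proj2 (below _)).
Qed.

Lemma staircase_rows (p : partition) : staircase p <-> (forall i, row p i = row p 0 - i).
Proof.
split=> [stair|rows_p k]; last by rewrite (rows_p k) (rows_p k.+1); lia.
elim=> [|i IH]; first by rewrite subn0.
case: (posnP (row p i)) => [pi0|pos_i].
  by have := row_mono p (leqnSn i); rewrite pi0 leqn0 => /eqP ->; lia.
by have := stair i pos_i; lia.
Qed.

Definition characterization (r p : partition) : Prop :=
  ~ yle p11 r /\ (exists z, ~ yle r z) /\
  (forall y, ~ yle p11 y -> (yle y p <-> yle y r)) /\ no_short_interval p.

(* The relation of the theorem is the characterization: [n]! is the staircase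
   whose first row is [n]. *)
Lemma single_fact_iff (r p : partition) : single_fact_rel r p <-> characterization r p.
Proof.
split=> [[n [pos_n [sval_r sval_p]]]|[row_r [nonempty [same_first no_short]]]].
  have rows_r : forall i, row r i = nth 0 [:: n] i by apply/sval_eqP; rewrite /= ?pos_n.
  have rows_p i : row p i = n - i.
    by rewrite -nth_stair; move: i; apply/sval_eqP; rewrite ?stair_pos.
  have r1 : row r 1 = 0 by rewrite rows_r.
  split; first by rewrite yle_p11 r1.
  split; first by apply/nonempty_iff; rewrite rows_r.
  split; first by apply/(first_rows_agree p r1); rewrite rows_r rows_p subn0.
  by apply/staircase_no_short/staircase_rows => i; rewrite !rows_p subn0.
have r1 : row r 1 = 0.
  by case: (posnP (row r 1)) => // pos_r1; case: row_r; apply/yle_p11.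
have pos_n : 0 < row r 0 by apply/nonempty_iff.
have rows_p i : row p i = row r 0 - i.
  rewrite -(proj1 (first_rows_agree p r1) same_first).
  by move: i; apply/staircase_rows/no_short_staircase.
exists (row r 0); split=> //; split.
  apply/sval_eqP; first by rewrite /= pos_n.
  by case=> [|i] //=; rewrite nth_nil one_row.
by apply/sval_eqP => [|i]; rewrite ?stair_pos // rows_p nth_stair.
Qed.

Definition var_le (x y : nat) : formula := FLe (TVar x) (TVar y).
Definition var_neq (x y : nat) : formula := FNot (FEq (TVar x) (TVar y)).
Definition var_one_row (x : nat) : formula := FNot (FLe TC11 (TVar x)).

(* The quantifier-free matrix of the defining formula, with free variables
   0 = rho, 1 = pi, 2 = y, 3 = u, 4 = m, 5 = z, 6 = w. *)
Definition matrix : formula :=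
  FAnd (var_one_row 0)
 (FAnd (FNot (var_le 0 5))
 (FAnd (FImp (var_one_row 2)
             (FAnd (FImp (var_le 2 1) (var_le 2 0)) (FImp (var_le 2 0) (var_le 2 1))))
       (FImp (FAnd (var_le 3 4) (FAnd (var_neq 3 4) (FAnd (var_le 4 1) (var_neq 4 1))))
             (FAnd (var_le 3 6) (FAnd (var_le 6 1)
               (FAnd (var_neq 6 3) (FAnd (var_neq 6 4) (var_neq 6 1)))))))).

Definition stair_formula : formula :=
  FAll 2 (FAll 3 (FAll 4 (FEx 5 (FEx 6 matrix)))).

Lemma stair_formula_Pi2 : Pi 2 stair_formula.
Proof.
do 3 apply: PiS_all; apply: PiS_base.
by do 2 apply: SigmaS_ex; apply/SigmaS_base/Pi0.
Qed.

Definition matrix_holds (r p y u m z w : partition) : Prop :=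
  ~ yle p11 r /\ ~ yle r z /\
  (~ yle p11 y -> (yle y p -> yle y r) /\ (yle y r -> yle y p)) /\
  (yle u m /\ u <> m /\ yle m p /\ m <> p ->
     yle u w /\ yle w p /\ w <> u /\ w <> m /\ w <> p).

Lemma sat_stair_formulaE (e : env) : sat e stair_formula <->
  forall y u m, exists z w, matrix_holds (e 0) (e 1) y u m z w.
Proof. exact: iff_refl. Qed.

(* The formula expresses the characterization; the quantifier over y and the
   one over u, m are independent, and z only witnesses that rho is nonempty. *)
Lemma sat_stair_formula (e : env) : sat e stair_formula <-> characterization (e 0) (e 1).
Proof.
apply: iff_trans (sat_stair_formulaE e) _; set r := e 0; set p := e 1.
split=> [sat_e|[row_r [[z not_rz] [same_first no_short]]] y u m].
  have [z [w [row_r [not_rz _]]]] := sat_e r r r.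
  split=> //; split; first by exists z.
  split=> [y row_y|u m le_um neq_um le_mp neq_mp].
    by have [_ [_ [_ [_ [/(_ row_y) [? ?] _]]]]] := sat_e y r r.
  have [_ [w' [_ [_ [_ short]]]]] := sat_e r u m.
  by exists w'; apply: short.
have [w short] : exists w : partition, yle u m /\ u <> m /\ yle m p /\ m <> p ->
    yle u w /\ yle w p /\ w <> u /\ w <> m /\ w <> p.
  case: (classic (yle u m /\ u <> m /\ yle m p /\ m <> p)) => [chain|no_chain].
    have [le_um [neq_um [le_mp neq_mp]]] := chain.
    by have [w fourth] := no_short u m le_um neq_um le_mp neq_mp; exists w.
  by exists u.
exists z, w; do 3 split=> //; move=> row_y.
by have [to_r to_p] := same_first y row_y; split.
Qed.

Theorem proposition3p8 : Pi_definable2 2 single_fact_rel.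
Proof.
exists stair_formula; split; first exact: stair_formula_Pi2.
move=> e; apply: iff_trans (single_fact_iff (e 0) (e 1)) _.
exact: iff_sym (sat_stair_formula e).
Qed.
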